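(* Let $E$ be a finite set, $\mathcal{Q}\subseteq 2^E$ a weakly Rayleigh set-system, and $A,B\in\mathcal{Q}$ with $A\cap B=\varnothing$. For every two-element set $\{e,f\}\subseteq B$ and every $g\in A$, at least one of $\mathcal{Q}^f_{eg}$ or $\mathcal{Q}^e_{fg}$ is nonempty.
   Context: For $\omega:2^E\to[0,\infty)$ not identically zero, $Z(\omega;\mathbf{y})=\sum_S\omega(S)\prod_{e\in S}y_e$; with subscripts denoting partial derivatives, $Z$ is Rayleigh if $Z_eZ_f-Z_{ef}Z\ge0$ for all distinct $e,f$ and all positive $\mathbf{y}$. $\mathcal{Q}$ is weakly Rayleigh if some $\omega\ge0$ with $\{S:\omega(S)>0\}=\mathcal{Q}$ has $Z(\omega;\mathbf{y})$ Rayleigh. Notation: $\mathcal{Q}^f_{eg}=\{S\setminus\{e,g\}: S\in\mathcal{Q},\ e,g\in S,\ f\notin S\}$, and similarly $\mathcal{Q}^e_{fg}$. *)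

From HB Require Import structures.
From mathcomp Require Import all_boot all_order all_algebra.
From mathcomp Require Import reals.
Set Implicit Arguments. Unset Strict Implicit. Unset Printing Implicit Defensive.
Import Order.TTheory GRing.Theory Num.Theory.
Local Open Scope ring_scope.

(* Partial derivative of the multiaffine generating polynomial
   Z(w; y) = \sum_S w(S) \prod_{x in S} y_x  with respect to all variables
   in D (each at most once): since Z is multiaffine in y, this is
   \sum_{S ⊇ D} w(S) \prod_{x in S \ D} y_x. *)
Definition Zpart (R : realType) (E : finType) (w : {set E} -> R)
    (D : {set E}) (y : E -> R) : R :=
  \sum_(S : {set E} | D \subset S) w S * \prod_(x in S :\: D) y x.

Definition Z (R : realType) (E : finType) (w : {set E} -> R) (y : E -> R) : R :=
  Zpart w set0 y.

Definition Rayleigh (R : realType) (E : finType) (w : {set E} -> R) : Prop :=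
  forall (e f : E), e != f -> forall y : E -> R, (forall x, 0 < y x) ->
    0 <= Zpart w [set e] y * Zpart w [set f] y
         - Zpart w [set e; f] y * Z w y.

Definition weakly_Rayleigh (R : realType) (E : finType) (Q : {set {set E}}) : Prop :=
  exists w : {set E} -> R,
    (forall S, 0 <= w S) /\ (forall S, (0 < w S) = (S \in Q)) /\ Rayleigh w.

Definition Qminor (E : finType) (Q : {set {set E}}) (f e g : E) : {set {set E}} :=
  [set S :\ e :\ g | S in [set S in Q | (e \in S) && (g \in S) && (f \notin S)]].

(* Fix g and specialise the generating polynomials to y_g = t, y_x = 1 for
   x <> g.  Each partial derivative Z_D with g notin D becomes p(D) + t q(D),
   where p(D) and q(D) are the total weights of the sets containing D that
   avoid, resp. contain, g.  If both minors were empty, every weighted set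
   through g would contain either both or neither of e and f, so
   q({e}) = q({f}) = q({e,f}) = k, while q({}) >= k + w(A) and p({e,f}) >= w(B).
   The Rayleigh difference is then a quadratic in t whose t^2 coefficient is
   at most -k w(A) and whose t coefficient is at most k (p(e) + p(f)) - w(A) w(B),
   so it becomes negative for t large. *)

From HB Require Import structures.
From mathcomp Require Import all_boot all_order all_algebra.
From mathcomp Require Import reals.
From mathcomp Require Import lra.
Set Implicit Arguments. Unset Strict Implicit. Unset Printing Implicit Defensive.
Import Order.TTheory GRing.Theory Num.Theory.
Local Open Scope ring_scope.

Lemma ler_sum_term (R : numDomainType) (I : finType) (P : pred I) (F : I -> R)
    (i : I) :
  (forall j, P j -> 0 <= F j) -> P i -> F i <= \sum_(j | P j) F j.
Proof.
move=> F_ge0 Pi; rewrite (bigD1 i) //= lerDl.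
by apply: sumr_ge0 => j /andP[Pj _]; exact: F_ge0.
Qed.

Section Specialisation.
Variables (R : realType) (E : finType) (w : {set E} -> R) (g : E).

Definition weight_avoiding (D : {set E}) : R :=
  \sum_(S : {set E} | (D \subset S) && (g \notin S)) w S.

Definition weight_through (D : {set E}) : R :=
  \sum_(S : {set E} | (D \subset S) && (g \in S)) w S.

Definition y_at (t : R) (x : E) : R := if x == g then t else 1.

Lemma y_at_gt0 (t : R) : 0 < t -> forall x, 0 < y_at t x.
Proof. by move=> t_gt0 x; rewrite /y_at; case: eqP. Qed.

Lemma prod_y_at (t : R) (S : {set E}) :
  \prod_(x in S) y_at t x = if g \in S then t else 1.
Proof.
case: ifP => gS.
  rewrite (bigD1 g) //= /y_at eqxx big1 ?mulr1 // => x /andP[_].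
  by move/negbTE->.
rewrite big1 // => x xS; rewrite /y_at; case: eqP => // xg.
by rewrite -xg xS in gS.
Qed.

Lemma Zpart_y_at (t : R) (D : {set E}) :
  g \notin D -> Zpart w D (y_at t) = weight_avoiding D + t * weight_through D.
Proof.
move=> gD; rewrite /Zpart (bigID (fun S : {set E} => g \in S)) /= addrC.
congr (_ + _).
  apply: eq_bigr => S /andP[_ gS].
  by rewrite prod_y_at in_setD (negbTE gS) andbF mulr1.
rewrite /weight_through mulr_sumr; apply: eq_bigr => S /andP[_ gS].
by rewrite prod_y_at in_setD gS gD mulrC.
Qed.

Hypothesis w_ge0 : forall S, 0 <= w S.

Lemma weight_avoiding_ge0 (D : {set E}) : 0 <= weight_avoiding D.
Proof. exact: sumr_ge0. Qed.

Lemma weight_through_ge0 (D : {set E}) : 0 <= weight_through D.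
Proof. exact: sumr_ge0. Qed.

Lemma weight_avoiding_ge (D S : {set E}) :
  D \subset S -> g \notin S -> w S <= weight_avoiding D.
Proof. by move=> DS gS; apply: ler_sum_term; rewrite ?DS. Qed.

Lemma weight_through_set0_ge (D A : {set E}) :
  g \in A -> ~~ (D \subset A) -> weight_through D + w A <= weight_through set0.
Proof.
move=> gA DA; rewrite /weight_through.
rewrite [X in _ <= X](bigID (fun S : {set E} => D \subset S)) /=.
rewrite [X in _ <= X + _](eq_bigl (fun S : {set E} => (D \subset S) && (g \in S)))
  ?lerD2l.
  by apply: ler_sum_term; rewrite ?sub0set ?gA.
by move=> S; rewrite sub0set andbC.
Qed.

Lemma weight_through_set1 (e f : E) :
  (forall S : {set E}, e \in S -> g \in S -> f \notin S -> w S = 0) ->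
  weight_through [set e] = weight_through [set e; f].
Proof.
move=> w_eq0; rewrite /weight_through (bigID (fun S : {set E} => f \in S)) /=.
rewrite [X in _ + X]big1 ?addr0; last first.
  by move=> S /andP[/andP[]]; rewrite sub1set => eS gS fS; exact: w_eq0.
apply: eq_bigl => S; rewrite subUset !sub1set.
by case: (e \in S); case: (f \in S); case: (g \in S).
Qed.

End Specialisation.

Lemma Rayleigh_quadratic_lt0 (R : realFieldType) (pe pf pef p0 k q0 a b t : R) :
  0 <= pe -> 0 <= pf -> 0 <= p0 -> 0 <= k -> 0 < b -> b <= pef ->
  k + a <= q0 -> 0 < t -> pe + pf <= a * t -> pe * pf < a * b * t ->
  (pe + t * k) * (pf + t * k) - (pef + t * k) * (p0 + t * q0) < 0.
Proof.
move=> pe_ge0 pf_ge0 p0_ge0 k_ge0 b_gt0 b_le q0_ge t_gt0 lin_t quad_t.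
have tk_ge0 : 0 <= t * k by apply: mulr_ge0; lra.
have q0_t : t * (k + a) <= t * q0 by apply: ler_wpM2l; lra.
have pef_q0 : b * (t * q0) <= pef * (t * q0).
  by apply: ler_wpM2r => //; nra.
have k_q0 : t * k * (t * (k + a)) <= t * k * (t * q0) by apply: ler_wpM2l.
have lin_term : t * k * (pe + pf - a * t) <= 0 by apply: mulr_ge0_le0; lra.
have : 0 <= pef * p0 + t * k * p0 by apply: addr_ge0; apply: mulr_ge0; lra.
nra.
Qed.

Lemma Rayleigh_quadratic_neg (R : realFieldType) (pe pf pef p0 k q0 a b : R) :
  0 <= pe -> 0 <= pf -> 0 <= p0 -> 0 <= k -> 0 < a -> 0 < b -> b <= pef ->
  k + a <= q0 -> exists2 t, 0 < t &
  (pe + t * k) * (pf + t * k) - (pef + t * k) * (p0 + t * q0) < 0.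
Proof.
move=> pe_ge0 pf_ge0 p0_ge0 k_ge0 a_gt0 b_gt0 b_le q0_ge.
have pepf_b : 0 <= pe * pf / b by apply: divr_ge0; [apply: mulr_ge0 | lra].
pose t := (pe + pf + pe * pf / b + 1) / a.
have at_def : a * t = pe + pf + pe * pf / b + 1.
  by rewrite mulrCA divff ?mulr1 ?gt_eqF.
have t_gt0 : 0 < t by apply: divr_gt0 => //; lra.
exists t => //; apply: (Rayleigh_quadratic_lt0 (a := a) (b := b)) => //.
  by rewrite at_def; lra.
rewrite mulrAC at_def !mulrDl divfK ?gt_eqF //.
have : 0 <= (pe + pf) * b by apply: mulr_ge0; lra.
lra.
Qed.

Lemma Qminor_eq0_notin (E : finType) (Q : {set {set E}}) (e f g : E)
    (S : {set E}) :
  Qminor Q f e g = set0 -> e \in S -> g \in S -> f \notin S -> S \notin Q.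
Proof.
move=> Q0 eS gS fS; apply/negP => SQ.
have : S :\ e :\ g \in Qminor Q f e g by apply: imset_f; rewrite inE SQ eS gS fS.
by rewrite Q0 inE.
Qed.

Theorem lemma4p5 (R : realType) (E : finType) (Q : {set {set E}})
    (A B : {set E}) :
  weakly_Rayleigh R Q -> A \in Q -> B \in Q -> A :&: B = set0 ->
  forall e f g : E, e \in B -> f \in B -> e != f -> g \in A ->
    Qminor Q f e g != set0 \/ Qminor Q e f g != set0.
Proof.
move=> [w [w_ge0 [w_supp Ray]]] AQ BQ AB e f g eB fB ef gA.
have w_eq0 S : S \notin Q -> w S = 0.
  by rewrite -w_supp -leNgt => wS_le0; apply/le_anti; rewrite wS_le0 w_ge0.
have AB_dis : [disjoint A & B] by rewrite -setI_eq0 AB.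
have gB : g \notin B by rewrite (disjointFr AB_dis gA).
have eA : e \notin A by rewrite (disjointFl AB_dis eB).
have ge : g != e by apply: contraNneq gB => ->.
have gf : g != f by apply: contraNneq gB => ->.
have [Qfe|] := eqVneq (Qminor Q f e g) set0; last by left.
have [Qef|] := eqVneq (Qminor Q e f g) set0; last by right.
set k := weight_through w g [set e; f].
have qe : weight_through w g [set e] = k.
  by apply: weight_through_set1 => S eS gS fS; apply/w_eq0/(Qminor_eq0_notin Qfe).
have qf : weight_through w g [set f] = k.
  rewrite /k setUC.
  by apply: weight_through_set1 => S fS gS eS; apply/w_eq0/(Qminor_eq0_notin Qef).
have q0 : k + w A <= weight_through w g set0.
  by apply: weight_through_set0_ge; rewrite // subUset !sub1set (negbTE eA).
have pef : w B <= weight_avoiding w g [set e; f].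
  by apply: weight_avoiding_ge; rewrite // subUset !sub1set eB fB.
have wA_gt0 : 0 < w A by rewrite w_supp.
have wB_gt0 : 0 < w B by rewrite w_supp.
have [t t_gt0] := Rayleigh_quadratic_neg (weight_avoiding_ge0 g w_ge0 [set e])
  (weight_avoiding_ge0 g w_ge0 [set f]) (weight_avoiding_ge0 g w_ge0 set0)
  (weight_through_ge0 g w_ge0 _) wA_gt0 wB_gt0 pef q0.
have := Ray e f ef _ (y_at_gt0 g t_gt0).
rewrite /Z !Zpart_y_at ?in_set1 ?in_set2 ?negb_or ?ge ?gf ?inE // qe qf.
by move=> Ray_ge0 /lt_geF; rewrite Ray_ge0.
Qed.
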